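(* Let $\mathcal H_S,\mathcal H_M$ be finite-dimensional complex Hilbert spaces and let $\Psi=\sum_{t\in D}\mu_t\,\phi_t\otimes\lambda_t$ be a unit vector in $\mathcal H_S\otimes\mathcal H_M$, with $D$ finite, unit vectors $\phi_t\in\mathcal H_S$, $\lambda_t\in\mathcal H_M$, and nonzero complex numbers $\mu_t$. (a) If the $\{\lambda_j\}_{j\in D}$ are orthonormal, then the $\{\phi_j\}_{j\in D}$ are fully distinguishable relative to $M$ (with witnessing family $b_j=\lambda_j$); explicitly $\Pr(q\mid\lambda_j)=|\langle q|\phi_j\rangle|^2$ for all unit $q\in\mathcal H_S$. (b) If the $\{\phi_j\}_{j\in D}$ are linearly independent and fully distinguishable relative to $M$, then the $\{\lambda_j\}_{j\in D}$ are orthonormal.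
   Context: For the pure joint state $\Psi$ with reduced states $\rho_S=\mathrm{Tr}_M|\Psi\rangle\langle\Psi|$, $\rho_M=\mathrm{Tr}_S|\Psi\rangle\langle\Psi|$, and unit vectors $q\in\mathcal H_S$, $b\in\mathcal H_M$: $\Pr(b)=\langle b|\rho_M|b\rangle$, $\Pr(q\wedge b)=|\langle q\otimes b|\Psi\rangle|^2$, $\Pr(q\mid b)=\Pr(q\wedge b)/\Pr(b)$ when $\Pr(b)>0$. The family $\{\phi_j\}_{j\in D}$ is fully distinguishable relative to $M$ iff there exists an orthonormal family $\{b_j\}_{j\in D}$ in $\mathcal H_M$ which is probability-complete, i.e. $\sum_{j\in D}\Pr(b_j)=1$, with $\Pr(b_j)>0$ and $\Pr(q\mid b_j)=|\langle q|\phi_j\rangle|^2$ for every $j\in D$ and every unit vector $q\in\mathcal H_S$. *)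

(* Finite-dimensional complex Hilbert spaces are modelled as
   C^n (column vectors 'cV[C]_n) with C := R[i], R : realType (so C = complex
   numbers when R = the reals).  The bipartite space H_S (x) H_M = C^n (x) C^m
   is modelled as n x m matrices: the elementary tensor phi (x) lam has
   entries phi_i * lam_k, i.e. it is phi *m lam^T. *)
From HB Require Import structures.
From mathcomp Require Import all_boot all_order all_algebra.
From mathcomp Require Import complex.
From mathcomp Require Import reals.
Set Implicit Arguments. Unset Strict Implicit. Unset Printing Implicit Defensive.
Import Order.TTheory GRing.Theory Num.Theory.
Local Open Scope ring_scope.
Local Open Scope complex_scope.

Section QM.
Variable R : realType.
Local Notation C := R[i].

Definition dotv n (u v : 'cV[C]_n) : C := \sum_(i < n) (u i 0)^* * v i 0.

Definition dotT n m (A B : 'M[C]_(n, m)) : C :=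
  \sum_(i < n) \sum_(k < m) (A i k)^* * B i k.

Definition tens n m (phi : 'cV[C]_n) (lam : 'cV[C]_m) : 'M[C]_(n, m) :=
  \matrix_(i, k) (phi i 0 * lam k 0).

Definition unit_vec n (u : 'cV[C]_n) : Prop := dotv u u = 1.
Definition unit_state n m (Psi : 'M[C]_(n, m)) : Prop := dotT Psi Psi = 1.

(* reduced state rho_M = Tr_S |Psi><Psi| : (rho_M)_{kl} = sum_i Psi_{ik} conj(Psi_{il}) *)
Definition rhoM n m (Psi : 'M[C]_(n, m)) : 'M[C]_m :=
  \matrix_(k, l) \sum_(i < n) Psi i k * (Psi i l)^*.

(* reduced state rho_S = Tr_M |Psi><Psi| *)
Definition rhoS n m (Psi : 'M[C]_(n, m)) : 'M[C]_n :=
  \matrix_(i, j) \sum_(k < m) Psi i k * (Psi j k)^*.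

Definition PrM n m (Psi : 'M[C]_(n, m)) (b : 'cV[C]_m) : C :=
  dotv b (rhoM Psi *m b).

Definition PrJ n m (Psi : 'M[C]_(n, m)) (q : 'cV[C]_n) (b : 'cV[C]_m) : C :=
  `|dotT (tens q b) Psi| ^+ 2.

Definition PrC n m (Psi : 'M[C]_(n, m)) (q : 'cV[C]_n) (b : 'cV[C]_m) : C :=
  PrJ Psi q b / PrM Psi b.

Definition orthonormal_fam (D : finType) n (f : D -> 'cV[C]_n) : Prop :=
  forall i j, dotv (f i) (f j) = (i == j)%:R.

Definition lin_indep (D : finType) n (f : D -> 'cV[C]_n) : Prop :=
  forall c : D -> C, \sum_(j : D) c j *: f j = 0 -> forall j, c j = 0.

Definition fd_witness (D : finType) n m (Psi : 'M[C]_(n, m))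
    (phi : D -> 'cV[C]_n) (b : D -> 'cV[C]_m) : Prop :=
  [/\ orthonormal_fam b,
      \sum_(j : D) PrM Psi (b j) = 1,
      forall j, 0 < PrM Psi (b j)
    & forall j (q : 'cV[C]_n), unit_vec q ->
        PrC Psi q (b j) = `|dotv q (phi j)| ^+ 2].

Definition fully_distinguishable (D : finType) n m (Psi : 'M[C]_(n, m))
    (phi : D -> 'cV[C]_n) : Prop :=
  exists b : D -> 'cV[C]_m, fd_witness Psi phi b.

End QM.

From HB Require Import structures.
From mathcomp Require Import all_boot all_order all_algebra.
From mathcomp Require Import complex reals ring.
Set Implicit Arguments. Unset Strict Implicit. Unset Printing Implicit Defensive.
Import Order.TTheory GRing.Theory Num.Theory.
Local Open Scope ring_scope.
Local Open Scope complex_scope.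

(* Contracting Psi with a vector b of H_M gives a vector v_b of H_S with
   Pr(b) = <v_b|v_b> and Pr(q /\ b) = |<q|v_b>|^2.  When the lam_t are
   orthonormal, v_(lam_j) = mu_j phi_j, which yields (a) directly.  For (b),
   Pr(phi_j | b_j) = 1 is the equality case of Cauchy-Schwarz, so v_(b_j) is
   parallel to phi_j; by linear independence of the phi_t this forces
   <b_j|lam_t> = 0 for j <> t.  Writing lam_t = <b_t|lam_t> b_t + r_t splits
   Psi into orthogonal parts P + Q with |P|^2 = sum_j Pr(b_j) = 1 = |Psi|^2,
   so Q = sum_t mu_t phi_t (x) r_t vanishes, and linear independence again
   gives r_t = 0: each lam_t is a multiple of b_t. *)

Section Inner.
Variable R : realType.
Local Notation C := R[i].

Lemma dotvC n (u v : 'cV[C]_n) : dotv u v = (dotv v u)^*.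
Proof.
rewrite /dotv rmorph_sum; apply: eq_bigr => i _.
by rewrite rmorphM /= conjcK mulrC.
Qed.

Lemma dotvDr n (u v w : 'cV[C]_n) : dotv u (v + w) = dotv u v + dotv u w.
Proof. by rewrite /dotv -big_split; apply: eq_bigr => i _; rewrite mxE mulrDr. Qed.

Lemma dotvZr n (a : C) (u v : 'cV[C]_n) : dotv u (a *: v) = a * dotv u v.
Proof. by rewrite /dotv mulr_sumr; apply: eq_bigr => i _; rewrite mxE mulrCA. Qed.

Lemma dotvBr n (u v w : 'cV[C]_n) : dotv u (v - w) = dotv u v - dotv u w.
Proof. by rewrite dotvDr -scaleN1r dotvZr mulN1r. Qed.

Lemma dotvZl n (a : C) (u v : 'cV[C]_n) : dotv (a *: u) v = a^* * dotv u v.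
Proof. by rewrite dotvC dotvZr rmorphM /= -dotvC. Qed.

Lemma dotvBl n (u v w : 'cV[C]_n) : dotv (v - w) u = dotv v u - dotv w u.
Proof. by rewrite dotvC dotvBr rmorphB /= -!dotvC. Qed.

Lemma dotvvE n (u : 'cV[C]_n) : dotv u u = \sum_i `|u i 0| ^+ 2.
Proof. by apply: eq_bigr => i _; rewrite normCKC. Qed.

Lemma dotvv_ge0 n (u : 'cV[C]_n) : 0 <= dotv u u.
Proof. by rewrite dotvvE sumr_ge0 // => i _; rewrite exprn_ge0. Qed.

Lemma dotvv_eq0 n (u : 'cV[C]_n) : dotv u u = 0 -> u = 0.
Proof.
rewrite dotvvE => /psumr_eq0P u0; apply/matrixP => i j; rewrite ord1 mxE.
have /eqP := u0 (fun i _ => exprn_ge0 2 (normr_ge0 (u i 0))) i isT.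
by rewrite expf_eq0 normr_eq0 => /eqP.
Qed.

Lemma cauchy_schwarz_eq n (p v : 'cV[C]_n) :
  dotv p p = 1 -> dotv v v = `|dotv p v| ^+ 2 -> v = dotv p v *: p.
Proof.
(* |v - <p|v> p|^2 = |v|^2 - |<p|v>|^2 since p is a unit vector *)
move=> p_unit vv; apply/eqP; rewrite -subr_eq0; apply/eqP/dotvv_eq0.
rewrite !dotvBl !dotvBr !dotvZl !dotvZr p_unit vv normCK [dotv v p]dotvC.
ring.
Qed.

Lemma dotTC n m (A B : 'M[C]_(n, m)) : dotT A B = (dotT B A)^*.
Proof.
rewrite /dotT rmorph_sum; apply: eq_bigr => i _; rewrite rmorph_sum.
by apply: eq_bigr => k _; rewrite rmorphM /= conjcK mulrC.
Qed.

Lemma dotTDr n m (A B B' : 'M[C]_(n, m)) : dotT A (B + B') = dotT A B + dotT A B'.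
Proof.
rewrite /dotT -big_split; apply: eq_bigr => i _; rewrite -big_split.
by apply: eq_bigr => k _; rewrite mxE mulrDr.
Qed.

Lemma dotTDl n m (A B B' : 'M[C]_(n, m)) : dotT (B + B') A = dotT B A + dotT B' A.
Proof. by rewrite dotTC dotTDr rmorphD /= -!dotTC. Qed.

Lemma dotTZr n m (a : C) (A B : 'M[C]_(n, m)) : dotT A (a *: B) = a * dotT A B.
Proof.
rewrite /dotT mulr_sumr; apply: eq_bigr => i _; rewrite mulr_sumr.
by apply: eq_bigr => k _; rewrite mxE mulrCA.
Qed.

Lemma dotTZl n m (a : C) (A B : 'M[C]_(n, m)) : dotT (a *: A) B = a^* * dotT A B.
Proof. by rewrite dotTC dotTZr rmorphM /= -dotTC. Qed.

Lemma dotT_sumr n m (I : finType) (A : 'M[C]_(n, m)) (F : I -> 'M[C]_(n, m)) :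
  dotT A (\sum_t F t) = \sum_t dotT A (F t).
Proof.
apply: (big_ind2 (fun B x => dotT A B = x)) => [|B B' x x' <- <-|//].
  by rewrite -(scale0r 0) dotTZr mul0r.
by rewrite dotTDr.
Qed.

Lemma dotT_suml n m (I : finType) (A : 'M[C]_(n, m)) (F : I -> 'M[C]_(n, m)) :
  dotT (\sum_t F t) A = \sum_t dotT (F t) A.
Proof.
rewrite dotTC dotT_sumr rmorph_sum.
by apply: eq_bigr => t _; rewrite /= -dotTC.
Qed.

Lemma dotTT_eq0 n m (A : 'M[C]_(n, m)) : dotT A A = 0 -> A = 0.
Proof.
have dotT_rows : dotT A A = \sum_i dotv (row i A)^T (row i A)^T.
  by apply: eq_bigr => i _; apply: eq_bigr => k _; rewrite !mxE.
rewrite dotT_rows => /psumr_eq0P A0; apply/matrixP => i k.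
have /matrixP/(_ k 0) : (row i A)^T = 0.
  by apply: dotvv_eq0; apply: A0 => // j _; apply: dotvv_ge0.
by rewrite !mxE.
Qed.

End Inner.

Section Tensor.
Variable R : realType.
Local Notation C := R[i].
Variables (n m : nat) (D : finType).
Implicit Types (x y : D -> C) (f h : D -> 'cV[C]_n) (g k : D -> 'cV[C]_m).

Lemma tensDr (p : 'cV[C]_n) (u v : 'cV[C]_m) : tens p (u + v) = tens p u + tens p v.
Proof. by apply/matrixP => i l; rewrite !mxE mulrDr. Qed.

Lemma tensZr (p : 'cV[C]_n) (a : C) (u : 'cV[C]_m) : tens p (a *: u) = a *: tens p u.
Proof. by apply/matrixP => i l; rewrite !mxE mulrCA. Qed.

Lemma dotT_tens (p q : 'cV[C]_n) (u v : 'cV[C]_m) :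
  dotT (tens p u) (tens q v) = dotv p q * dotv u v.
Proof.
rewrite /dotT /dotv mulr_suml; apply: eq_bigr => i _; rewrite mulr_sumr.
by apply: eq_bigr => l _; rewrite !mxE rmorphM /=; ring.
Qed.

Lemma dotT_sum_tens x y f h g k :
  dotT (\sum_s x s *: tens (f s) (g s)) (\sum_t y t *: tens (h t) (k t)) =
  \sum_s \sum_t (x s)^* * y t * (dotv (f s) (h t) * dotv (g s) (k t)).
Proof.
rewrite dotT_suml; apply: eq_bigr => s _; rewrite dotT_sumr.
by apply: eq_bigr => t _; rewrite dotTZl dotTZr dotT_tens !mulrA.
Qed.

Lemma dotT_sum_tens_orth x y f h g k :
  (forall s t, dotv (g s) (k t) = 0) ->
  dotT (\sum_s x s *: tens (f s) (g s)) (\sum_t y t *: tens (h t) (k t)) = 0.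
Proof.
move=> gk; rewrite dotT_sum_tens big1 // => s _.
by rewrite big1 // => t _; rewrite gk !mulr0.
Qed.

Lemma dotT_sum_tens_orthonormal x f g :
  (forall s, unit_vec (f s)) -> orthonormal_fam g ->
  dotT (\sum_s x s *: tens (f s) (g s)) (\sum_t x t *: tens (f t) (g t)) =
  \sum_s `|x s| ^+ 2.
Proof.
move=> f_unit g_on; rewrite dotT_sum_tens; apply: eq_bigr => s _.
rewrite (bigD1 s) //= big1 => [|t ts]; last by rewrite g_on eq_sym (negbTE ts) !mulr0.
by rewrite addr0 f_unit g_on eqxx !mulr1 normCKC.
Qed.

Lemma dotT_pythagoras (A B : 'M[C]_(n, m)) :
  dotT A B = 0 -> dotT (A + B) (A + B) = dotT A A + dotT B B.
Proof.
move=> AB; have BA : dotT B A = 0 by rewrite dotTC AB conjc0.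
by rewrite dotTDl !dotTDr AB BA addr0 add0r.
Qed.

Lemma lin_indep_sum_tens_eq0 f g :
  lin_indep f -> \sum_t tens (f t) (g t) = 0 -> forall t, g t = 0.
Proof.
move=> f_li fg0 t; apply/matrixP => l j; rewrite ord1 mxE.
apply: (f_li (fun s => g s l 0)) => //; apply/matrixP => i j'.
have /matrixP/(_ i l) := fg0; rewrite summxE mxE => fg0il.
rewrite ord1 summxE mxE -[RHS]fg0il.
by apply: eq_bigr => s _; rewrite !mxE mulrC.
Qed.

Lemma lin_indep_sum_eq_single f (c : D -> C) (a : C) j :
  lin_indep f -> \sum_s c s *: f s = a *: f j -> forall t, t != j -> c t = 0.
Proof.
move=> f_li cf t tj.
pose c' s := c s - (s == j)%:R * a.
have c'f : \sum_s c' s *: f s = 0.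
  under eq_bigr do rewrite scalerBl -scalerA.
  rewrite sumrB cf (bigD1 j) //= eqxx scale1r big1 ?addr0 ?subrr // => s sj.
  by rewrite (negbTE sj) scale0r.
by have := f_li c' c'f t; rewrite /c' (negbTE tj) mul0r subr0.
Qed.

End Tensor.

Section PartialInner.
Variable R : realType.
Local Notation C := R[i].
Variables (n m : nat).

(* The partial inner product (1 (x) <b|) Psi, a vector of H_S. *)
Definition pdotM (b : 'cV[C]_m) (Psi : 'M[C]_(n, m)) : 'cV[C]_n :=
  \col_i \sum_k (b k 0)^* * Psi i k.

Lemma PrJE (Psi : 'M[C]_(n, m)) q b : PrJ Psi q b = `|dotv q (pdotM b Psi)| ^+ 2.
Proof.
congr (`|_| ^+ 2); apply: eq_bigr => i _; rewrite !mxE mulr_sumr.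
by apply: eq_bigr => k _; rewrite mxE rmorphM /= mulrA.
Qed.

Lemma PrME (Psi : 'M[C]_(n, m)) b : PrM Psi b = dotv (pdotM b Psi) (pdotM b Psi).
Proof.
transitivity (\sum_i \sum_k \sum_l (b k 0)^* * Psi i k * (Psi i l)^* * b l 0).
  rewrite /PrM /dotv; under eq_bigr => k _ do rewrite !mxE mulr_sumr.
  under eq_bigr => k _ do under eq_bigr => l _ do rewrite !mxE big_distrl big_distrr.
  under eq_bigr do rewrite exchange_big; rewrite exchange_big /=.
  by apply: eq_bigr => i _; apply: eq_bigr => k _; apply: eq_bigr => l _; ring.
apply: eq_bigr => i _; rewrite !mxE rmorph_sum mulr_suml exchange_big /=.
apply: eq_bigr => k _; rewrite mulr_sumr.
by apply: eq_bigr => l _; rewrite rmorphM /= conjCK; ring.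
Qed.

Lemma pdotM_sum_tens (D : finType) b (mu : D -> C) (phi : D -> 'cV[C]_n)
    (lam : D -> 'cV[C]_m) :
  pdotM b (\sum_t mu t *: tens (phi t) (lam t)) =
  \sum_t (mu t * dotv b (lam t)) *: phi t.
Proof.
apply/matrixP => i j; rewrite ord1 !mxE summxE.
under eq_bigr => k _ do rewrite summxE mulr_sumr.
rewrite exchange_big /=; apply: eq_bigr => t _.
rewrite !mxE /dotv big_distrr big_distrl /=.
by apply: eq_bigr => k _; rewrite !mxE; ring.
Qed.

End PartialInner.

Section Distinguishability.
Variable R : realType.
Local Notation C := R[i].
Variables (n m : nat) (D : finType) (Psi : 'M[C]_(n, m)) (mu : D -> C)
  (phi : D -> 'cV[C]_n) (lam : D -> 'cV[C]_m).
Hypothesis Psi_unit : unit_state Psi.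
Hypothesis PsiE : Psi = \sum_t mu t *: tens (phi t) (lam t).
Hypothesis phi_unit : forall t, unit_vec (phi t).
Hypothesis mu_neq0 : forall t, mu t != 0.

Lemma pdotM_single (b : 'cV[C]_m) j :
  (forall t, t != j -> dotv b (lam t) = 0) ->
  pdotM b Psi = (mu j * dotv b (lam j)) *: phi j.
Proof.
move=> b_lam; rewrite PsiE pdotM_sum_tens (bigD1 j) //= big1 ?addr0 // => t tj.
by rewrite b_lam // mulr0 scale0r.
Qed.

Lemma orthonormal_fd_witness : orthonormal_fam lam -> fd_witness Psi phi lam.
Proof.
move=> lam_on.
have lam_off j t : t != j -> dotv (lam j) (lam t) = 0.
  by rewrite lam_on eq_sym => /negbTE ->.
have PrM_lam j : PrM Psi (lam j) = `|mu j| ^+ 2.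
  rewrite PrME (pdotM_single (lam_off j)).
  by rewrite dotvZl dotvZr phi_unit lam_on eqxx !mulr1 normCKC.
have PrM_lam_gt0 j : 0 < PrM Psi (lam j) by rewrite PrM_lam exprn_gt0 ?normr_gt0.
split=> // [|j q _].
  by under eq_bigr do rewrite PrM_lam; rewrite -Psi_unit PsiE dotT_sum_tens_orthonormal.
rewrite /PrC PrJE (pdotM_single (lam_off j)) dotvZr lam_on eqxx mulr1 normrM exprMn -PrM_lam mulrAC divff ?mul1r //.
exact: lt0r_neq0.
Qed.

Section Witness.
Variable b : D -> 'cV[C]_m.
Hypothesis b_fd : fd_witness Psi phi b.

Lemma fd_witness_pdotM_parallel j :
  pdotM (b j) Psi = dotv (phi j) (pdotM (b j) Psi) *: phi j.
Proof.
case: b_fd => _ _ PrM_gt0 PrC_phi.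
apply: cauchy_schwarz_eq; first exact: phi_unit.
have := PrC_phi j (phi j) (phi_unit j); rewrite phi_unit normr1 expr1n /PrC.
by move/divr1_eq/esym; rewrite PrME PrJE.
Qed.

Hypothesis phi_li : lin_indep phi.

Lemma fd_witness_overlap_offdiag j t : t != j -> dotv (b j) (lam t) = 0.
Proof.
move=> tj; have := fd_witness_pdotM_parallel j; rewrite {1}PsiE pdotM_sum_tens.
move/(lin_indep_sum_eq_single phi_li)/(_ t tj)/eqP.
by rewrite mulf_eq0 (negbTE (mu_neq0 t)) => /eqP.
Qed.

Lemma fd_witness_PrM j : PrM Psi (b j) = `|mu j * dotv (b j) (lam j)| ^+ 2.
Proof.
rewrite PrME (pdotM_single (@fd_witness_overlap_offdiag j)).
by rewrite dotvZl dotvZr phi_unit mulr1 normCKC.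
Qed.

Lemma fd_witness_lam_parallel t : lam t = dotv (b t) (lam t) *: b t.
Proof.
case: b_fd => b_on PrM_sum _ _.
pose a s := dotv (b s) (lam s); pose r s := lam s - a s *: b s.
pose P := \sum_s (mu s * a s) *: tens (phi s) (b s).
pose Q := \sum_s mu s *: tens (phi s) (r s).
have b_r s s' : dotv (b s) (r s') = 0.
  rewrite dotvBr dotvZr b_on; have [<-|ss'] := eqVneq s s'; first by rewrite mulr1 subrr.
  by rewrite fd_witness_overlap_offdiag 1?eq_sym // mulr0 subrr.
have PsiPQ : Psi = P + Q.
  rewrite PsiE -big_split; apply: eq_bigr => s _ /=.
  by rewrite -scalerA -scalerDr; congr (_ *: _); rewrite -tensZr -tensDr /r addrC subrK.
have P_norm : dotT P P = 1.
  rewrite dotT_sum_tens_orthonormal // -PrM_sum.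
  by apply: eq_bigr => s _; rewrite fd_witness_PrM.
have Q_norm : dotT Q Q = 0.
  apply: (addrI 1); rewrite addr0 -{1}P_norm -dotT_pythagoras ?dotT_sum_tens_orth //.
  by rewrite -PsiPQ.
have /(lin_indep_sum_tens_eq0 phi_li)/(_ t)/eqP : \sum_s tens (phi s) (mu s *: r s) = 0.
  by rewrite -[RHS](dotTT_eq0 Q_norm); apply: eq_bigr => s _; rewrite tensZr.
by rewrite scaler_eq0 (negbTE (mu_neq0 t)) subr_eq0 => /eqP.
Qed.

Lemma fd_witness_orthonormal : (forall t, unit_vec (lam t)) -> orthonormal_fam lam.
Proof.
move=> lam_unit s t; have [<-|st] := eqVneq s t; first exact: lam_unit.
case: b_fd => b_on _ _ _.
rewrite (fd_witness_lam_parallel s) (fd_witness_lam_parallel t) dotvZl dotvZr b_on.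
by rewrite (negbTE st) !mulr0.
Qed.

End Witness.
End Distinguishability.

Theorem lemmaA3 (R : realType) (n m : nat) (D : finType)
    (Psi : 'M[R[i]]_(n, m)) (mu : D -> R[i])
    (phi : D -> 'cV[R[i]]_n) (lam : D -> 'cV[R[i]]_m) :
  unit_state Psi ->
  Psi = \sum_(t : D) mu t *: tens (phi t) (lam t) ->
  (forall t, unit_vec (phi t)) ->
  (forall t, unit_vec (lam t)) ->
  (forall t, mu t != 0) ->
  (orthonormal_fam lam ->
     fully_distinguishable Psi phi /\ fd_witness Psi phi lam /\
     (forall j (q : 'cV[R[i]]_n), unit_vec q ->
        PrC Psi q (lam j) = `|dotv q (phi j)| ^+ 2))
  /\
  (lin_indep phi -> fully_distinguishable Psi phi -> orthonormal_fam lam).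
Proof.
move=> Psi_unit PsiE phi_unit lam_unit mu_neq0; split.
  move=> /(orthonormal_fd_witness Psi_unit PsiE phi_unit mu_neq0) lam_fd.
  split; first by exists lam.
  by split=> //; case: lam_fd.
move=> phi_li [b b_fd].
exact: (fd_witness_orthonormal Psi_unit PsiE phi_unit mu_neq0 b_fd phi_li lam_unit).
Qed.
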